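(* Let $\Bbbk$ be an algebraically closed field of characteristic $2$ and let $\mathfrak{u}(\mathfrak{m})$ be the algebra generated by $a,b,c$ with relations $ab+ba=c$, $ac+ca=a$, $bc+cb=b$, $a^4=b^4=0$, $c^2+c=0$. If $0\to V_1\to U\to V_0\to 0$ is an exact sequence of $\mathfrak{u}(\mathfrak{m})$-modules, then $U\simeq V_{\vartheta,\lambda,\mu}$ for some $\vartheta,\lambda,\mu\in\Bbbk$. Moreover $\dim\operatorname{Ext}^1_{\mathfrak{u}(\mathfrak{m})}(V_0,V_1)=2$.
   Context: $V_0$ is the one-dimensional module on which $a,b,c$ act by $0$. $V_1$ is the three-dimensional module with basis $v_1,v_2,v_3$ and action $av_1=v_2$, $av_2=v_3$, $av_3=0$; $bv_1=0$, $bv_2=v_1$, $bv_3=v_2$; $cv_1=v_1$, $cv_2=0$, $cv_3=v_3$. For $\vartheta,\lambda,\mu\in\Bbbk$, $V_{\vartheta,\lambda,\mu}$ is $\Bbbk^4$ with standard basis $e_1,\dots,e_4$ and action $ae_1=\vartheta e_2$, $ae_2=e_3$, $ae_3=e_4$, $ae_4=0$; $be_1=\lambda e_3+\mu e_4$, $be_2=0$, $be_3=e_2$, $be_4=e_3$; $ce_1=\lambda e_4$, $ce_2=e_2$, $ce_3=0$, $ce_4=e_4$. *)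

From HB Require Import structures.
From mathcomp Require Import all_boot all_order all_algebra.
Set Implicit Arguments. Unset Strict Implicit. Unset Printing Implicit Defensive.
Import GRing.Theory.
Local Open Scope ring_scope.

(* A finite-dimensional module over the algebra generated by a, b, c:
   the carrier is K^udim (column vectors) and a, b, c act by the matrices
   ua, ub, uc (entry (i,j) = coefficient of e_i in g e_j). *)
Record umod (K : fieldType) := UMod {
  udim : nat;
  ua : 'M[K]_udim; ub : 'M[K]_udim; uc : 'M[K]_udim }.

Definition is_umod (K : fieldType) (V : umod K) : Prop :=
  let A := ua V in let B := ub V in let C := uc V in
  [/\ A *m B + B *m A = C, A *m C + C *m A = A, B *m C + C *m B = B,
      A *m A *m A *m A = 0 /\ B *m B *m B *m B = 0 & C *m C + C = 0].

Definition is_hom (K : fieldType) (V W : umod K) (f : 'M[K]_(udim W, udim V)) : Prop :=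
  [/\ f *m ua V = ua W *m f, f *m ub V = ub W *m f & f *m uc V = uc W *m f].

Definition mx_injective (K : fieldType) m n (f : 'M[K]_(m, n)) : Prop :=
  forall v : 'cV[K]_n, f *m v = 0 -> v = 0.

Definition mx_surjective (K : fieldType) m n (f : 'M[K]_(m, n)) : Prop :=
  forall w : 'cV[K]_m, exists v : 'cV[K]_n, f *m v = w.

Definition short_exact (K : fieldType) (L M N : umod K)
  (f : 'M[K]_(udim M, udim L)) (g : 'M[K]_(udim N, udim M)) : Prop :=
  [/\ is_hom f, is_hom g, mx_injective f, mx_surjective g
    & forall v : 'cV[K]_(udim M), g *m v = 0 <-> exists w, v = f *m w].

Definition isomorphic (K : fieldType) (V W : umod K) : Prop :=
  exists f : 'M[K]_(udim W, udim V), [/\ is_hom f, mx_injective f & mx_surjective f].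

Definition V0 (K : fieldType) : umod K := @UMod K 1 0 0 0.

Definition mxf (K : fieldType) n (F : nat -> nat -> K) : 'M[K]_n :=
  \matrix_(i < n, j < n) F (val i) (val j).

(* V_1 with basis v1 v2 v3 (indices 0,1,2) *)
Definition V1a (K : fieldType) : nat -> nat -> K := fun i j =>
  match i, j with 1%N, 0%N => 1 | 2%N, 1%N => 1 | _, _ => 0 end.
Definition V1b (K : fieldType) : nat -> nat -> K := fun i j =>
  match i, j with 0%N, 1%N => 1 | 1%N, 2%N => 1 | _, _ => 0 end.
Definition V1c (K : fieldType) : nat -> nat -> K := fun i j =>
  match i, j with 0%N, 0%N => 1 | 2%N, 2%N => 1 | _, _ => 0 end.
Definition V1 (K : fieldType) : umod K :=
  @UMod K 3 (mxf 3 (@V1a K)) (mxf 3 (@V1b K)) (mxf 3 (@V1c K)).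

(* V_{theta,lambda,mu} with basis e1..e4 (indices 0..3) *)
Definition Va (K : fieldType) (th : K) : nat -> nat -> K := fun i j =>
  match i, j with 1%N, 0%N => th | 2%N, 1%N => 1 | 3%N, 2%N => 1 | _, _ => 0 end.
Definition Vb (K : fieldType) (la mu : K) : nat -> nat -> K := fun i j =>
  match i, j with 2%N, 0%N => la | 3%N, 0%N => mu | 1%N, 2%N => 1 | 2%N, 3%N => 1
  | _, _ => 0 end.
Definition Vc (K : fieldType) (la : K) : nat -> nat -> K := fun i j =>
  match i, j with 3%N, 0%N => la | 1%N, 1%N => 1 | 3%N, 3%N => 1 | _, _ => 0 end.
Definition Vtlm (K : fieldType) (th la mu : K) : umod K :=
  @UMod K 4 (mxf 4 (Va th)) (mxf 4 (Vb la mu)) (mxf 4 (Vc la)).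

(* Ext^1(M, N) via Yoneda extensions 0 -> N -> U -> M -> 0 realised on N (+) M:
   a cocycle is a triple (Xa, Xb, Xc) such that the block upper-triangular
   matrices [[N_g, X_g], [0, M_g]] define a module; coboundaries are those
   of the form X_g = N_g Y - Y M_g (change of splitting). *)
Definition ext_mod (K : fieldType) (N M : umod K) (Xa Xb Xc : 'M[K]_(udim N, udim M)) :
  umod K :=
  @UMod K (udim N + udim M) (block_mx (ua N) Xa 0 (ua M))
    (block_mx (ub N) Xb 0 (ub M)) (block_mx (uc N) Xc 0 (uc M)).

Definition is_cocycle (K : fieldType) (N M : umod K) (Xa Xb Xc : 'M[K]_(udim N, udim M)) :=
  is_umod (ext_mod Xa Xb Xc).

Definition is_coboundary (K : fieldType) (N M : umod K) (Xa Xb Xc : 'M[K]_(udim N, udim M)) :=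
  exists Y : 'M[K]_(udim N, udim M),
    [/\ Xa = ua N *m Y - Y *m ua M, Xb = ub N *m Y - Y *m ub M
      & Xc = uc N *m Y - Y *m uc M].

Definition ext1_dim (K : fieldType) (M N : umod K) (d : nat) : Prop :=
  exists Za Zb Zc : 'I_d -> 'M[K]_(udim N, udim M),
  [/\ forall i, is_cocycle (Za i) (Zb i) (Zc i),
      forall Xa Xb Xc, is_cocycle Xa Xb Xc ->
        exists al : 'I_d -> K,
          is_coboundary (Xa - \sum_i al i *: Za i) (Xb - \sum_i al i *: Zb i)
                        (Xc - \sum_i al i *: Zc i)
    & forall al : 'I_d -> K,
        is_coboundary (\sum_i al i *: Za i) (\sum_i al i *: Zb i) (\sum_i al i *: Zc i) ->
        forall i, al i = 0].

From HB Require Import structures.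
From mathcomp Require Import all_boot all_order all_algebra.
From mathcomp Require Import ring.
Set Implicit Arguments. Unset Strict Implicit. Unset Printing Implicit Defensive.
Import GRing.Theory.
Local Open Scope ring_scope.

(* An extension U of the trivial module V_0 by N is N (+) k u, so it is determined by
   the vectors a u, b u, c u of N; the relations of u(m) on U are linear conditions on
   them (a cocycle), and moving the lift u by w in N changes them by the coboundary
   (a w, b w, c w). For N = V_1 in characteristic 2, writing x = a u and y = b u, the
   cocycle conditions say y_1 = x_3 and c u = (x_2, 0, y_2), a 5-dimensional space,
   while the coboundaries ((0, w_1, w_2), (w_2, w_3, 0), (w_1, 0, w_3)) form a
   3-dimensional one: Ext^1 is spanned by the classes recording x_1 and y_3. In the
   basis u - x_2 v_1 - x_3 v_2, v_1, v_2, v_3 the module U is V_{x_1, y_2, y_3}. *)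

Section Modules.
Variable K : fieldType.

Lemma mx_injective_lcancel m n p (f : 'M[K]_(m, n)) (M N : 'M[K]_(n, p)) :
  mx_injective f -> f *m M = f *m N -> M = N.
Proof.
move=> injf eqMN; apply/matrixP => i j.
have : col j M = col j N.
  apply/eqP; rewrite -subr_eq0; apply/eqP/injf.
  by rewrite mulmxBr !colE !mulmxA eqMN subrr.
by move/colP/(_ i); rewrite !mxE.
Qed.

Lemma intertwineM m n (f : 'M[K]_(m, n)) (X Y : 'M[K]_n) (X' Y' : 'M[K]_m) :
  f *m X = X' *m f -> f *m Y = Y' *m f -> f *m (X *m Y) = X' *m Y' *m f.
Proof. by move=> hX hY; rewrite mulmxA hX -mulmxA hY mulmxA. Qed.

Lemma intertwineD m n (f : 'M[K]_(m, n)) (X Y : 'M[K]_n) (X' Y' : 'M[K]_m) :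
  f *m X = X' *m f -> f *m Y = Y' *m f -> f *m (X + Y) = (X' + Y') *m f.
Proof. by move=> hX hY; rewrite mulmxDr mulmxDl hX hY. Qed.

Lemma is_umod_inj_hom (V W : umod K) (f : 'M[K]_(udim W, udim V)) :
  is_hom f -> mx_injective f -> is_umod W -> is_umod V.
Proof.
case=> fa fb fc injf [AB AC BC [A4 B4] CC].
split; try split; apply: (mx_injective_lcancel injf).
- by rewrite (intertwineD (intertwineM fa fb) (intertwineM fb fa)) AB fc.
- by rewrite (intertwineD (intertwineM fa fc) (intertwineM fc fa)) AC fa.
- by rewrite (intertwineD (intertwineM fb fc) (intertwineM fc fb)) BC fb.
- by rewrite (intertwineM (intertwineM (intertwineM fa fa) fa) fa) A4 mul0mx mulmx0.
- by rewrite (intertwineM (intertwineM (intertwineM fb fb) fb) fb) B4 mul0mx mulmx0.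
- by rewrite (intertwineD (intertwineM fc fc) fc) CC mul0mx mulmx0.
Qed.

Lemma isomorphic_trans (U V W : umod K) :
  isomorphic U V -> isomorphic V W -> isomorphic U W.
Proof.
case=> f [[fa fb fc] injf surjf] [g [[ga gb gc] injg surjg]].
exists (g *m f); split.
- by split; rewrite -mulmxA ?fa ?fb ?fc !mulmxA ?ga ?gb ?gc.
- by move=> v; rewrite -mulmxA => /injg /injf.
- move=> w; have [v <-] := surjg w; have [u <-] := surjf v.
  by exists u; rewrite mulmxA.
Qed.

Lemma isomorphic_of_inverse (V W : umod K) (f : 'M[K]_(udim W, udim V))
    (h : 'M[K]_(udim V, udim W)) :
  is_hom f -> h *m f = 1%:M -> f *m h = 1%:M -> isomorphic V W.
Proof.
move=> homf hf fh; exists f; split=> // [v fv0|w].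
- by rewrite -[v]mul1mx -hf -mulmxA fv0 mulmx0.
- by exists (h *m w); rewrite mulmxA fh mul1mx.
Qed.

End Modules.

Section ExtensionsOfV0.
Variable (K : fieldType) (N : umod K).

Lemma ext_V0_cocycleP (Xa Xb Xc : 'cV[K]_(udim N)) : is_umod N ->
  is_cocycle (M := V0 K) Xa Xb Xc <->
  [/\ ua N *m Xb + ub N *m Xa = Xc, ua N *m Xc + uc N *m Xa = Xa,
      ub N *m Xc + uc N *m Xb = Xb,
      ua N *m ua N *m ua N *m Xa = 0 /\ ub N *m ub N *m ub N *m Xb = 0
    & uc N *m Xc + Xc = 0].
Proof.
move=> [AB AC BC [A4 B4] CC]; rewrite /is_cocycle /is_umod /=.
rewrite -(block_mx0 _ (udim N) 1 (udim N) 1) !mulmx_block !add_block_mx.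
rewrite !mulmx0 !mul0mx !addr0 !mul0mx AB AC BC A4 B4 CC.
have blockP n (A : 'M[K]_n) (X Y : 'cV_n) :
    block_mx A X 0 0 = block_mx A Y 0 0 <-> X = Y.
  by split=> [/eq_block_mx[]|->].
by split=> [[/blockP ? /blockP ? /blockP ? [/blockP ? /blockP ?] /blockP ?]
           | [-> -> -> [-> ->] ->]].
Qed.

Lemma ext_V0_coboundaryP (Xa Xb Xc : 'cV[K]_(udim N)) :
  is_coboundary (M := V0 K) Xa Xb Xc <->
  exists Y, [/\ Xa = ua N *m Y, Xb = ub N *m Y & Xc = uc N *m Y].
Proof.
rewrite /is_coboundary /=.
by split=> -[Y]; rewrite ?mulmx0 ?subr0 => XY; exists Y; rewrite ?mulmx0 ?subr0.
Qed.

Lemma short_exact_V0_ext (U : umod K) (f : 'M[K]_(udim U, udim N))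
    (g : 'M[K]_(1, udim U)) :
  short_exact (N := V0 K) f g ->
  exists Xa Xb Xc : 'cV_(udim N), isomorphic (ext_mod (M := V0 K) Xa Xb Xc) U.
Proof.
case=> [[fa fb fc] [ga gb gc] injf surjg exact_fg].
have [u gu] := surjg 1%:M.
have gf0 : g *m f = 0.
  apply/matrixP => i j.
  have /exact_fg : exists w, f *m delta_mx j (0 : 'I_1) = f *m w.
    by exists (delta_mx j 0).
  by rewrite mulmxA -colE => /colP/(_ i); rewrite !mxE.
have lift_act (h : 'M_(udim U)) : g *m h = 0 *m g -> exists x, h *m u = f *m x.
  by rewrite mul0mx => gh0; apply/exact_fg; rewrite mulmxA gh0 mul0mx.
have [[xa Ha] [xb Hb] [xc Hc]] := And3 (lift_act _ ga) (lift_act _ gb) (lift_act _ gc).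
exists xa, xb, xc, (row_mx f u); split.
- by split; rewrite /= mul_row_block !mulmx0 !addr0 mul_mx_row
    ?(fa, fb, fc) ?(Ha, Hb, Hc).
- move=> v; rewrite -[v]vsubmxK mul_row_col => fu0.
  have v20 : dsubmx v = 0.
    move: (congr1 (mulmx g) fu0).
    by rewrite mulmxDr !mulmxA gf0 gu mul0mx mul1mx add0r mulmx0.
  by move: fu0; rewrite v20 mulmx0 addr0 => /injf->; rewrite col_mx0.
- move=> w; have [r Hr] : exists r, w - u *m (g *m w) = f *m r.
    by apply/exact_fg; rewrite mulmxBr [g *m (u *m _)]mulmxA gu mul1mx subrr.
  by exists (col_mx r (g *m w)); rewrite mul_row_col -Hr subrK.
Qed.

End ExtensionsOfV0.

Ltac mx_compute := apply/matrixP;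
  let i := fresh "i" in let j := fresh "j" in
  let Hi := fresh "Hi" in let Hj := fresh "Hj" in
  intros [[|[|[|[|i]]]] Hi] [[|[|[|[|j]]]] Hj];
  try (exfalso; move: Hi; by rewrite !ltnS ltn0);
  try (exfalso; move: Hj; by rewrite !ltnS ltn0);
  rewrite ?(mxE, big_ord_recl, big_ord0) /=; try ring.

Section ExtensionsOfV0ByV1.
Variable K : fieldType.
Hypothesis char2 : (2 \in [pchar K])%N.

Definition cv3 (a b c : K) : 'cV[K]_3 := \col_i nth 0 [:: a; b; c] i.

Lemma cv3_onto (x : 'cV[K]_3) : exists a b c, x = cv3 a b c.
Proof.
exists (x 0 0), (x 1 0), (x 2 0); apply/matrixP => i j; rewrite !mxE (ord1 j).
by case: i => [[|[|[|i]]] Hi] //=; congr (x _ _); apply: val_inj.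
Qed.

Lemma cv3_inj a b c a' b' c' :
  cv3 a b c = cv3 a' b' c' -> [/\ a = a', b = b' & c = c'].
Proof.
by move/matrixP=> E; split; [move: (E 0 0) | move: (E 1 0) | move: (E 2 0)];
  rewrite !mxE.
Qed.

Lemma cv3_000 : cv3 0 0 0 = 0. Proof. by mx_compute. Qed.

Lemma add_cv3 a b c a' b' c' :
  cv3 a b c + cv3 a' b' c' = cv3 (a + a') (b + b') (c + c').
Proof. by mx_compute. Qed.

Lemma scale_cv3 k a b c : k *: cv3 a b c = cv3 (k * a) (k * b) (k * c).
Proof. by mx_compute. Qed.

Lemma V1_ua_cv3 a b c : ua (V1 K) *m cv3 a b c = cv3 0 a b. Proof. by mx_compute. Qed.
Lemma V1_ub_cv3 a b c : ub (V1 K) *m cv3 a b c = cv3 b c 0. Proof. by mx_compute. Qed.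
Lemma V1_uc_cv3 a b c : uc (V1 K) *m cv3 a b c = cv3 a 0 c. Proof. by mx_compute. Qed.

Lemma mx_cv3P m (M M' : 'M[K]_(m, 3)) :
  (forall a b c, M *m cv3 a b c = M' *m cv3 a b c) -> M = M'.
Proof.
move=> E; apply/matrixP => i j; have [a [b [c ej]]] := cv3_onto (delta_mx j 0).
by move: (E a b c); rewrite -ej -!colE => /colP/(_ i); rewrite !mxE.
Qed.

Lemma V1_umod : is_umod (V1 K).
Proof.
by split; try split; apply: mx_cv3P => a b c;
  rewrite ?mulmxDl -!mulmxA !(V1_ua_cv3, V1_ub_cv3, V1_uc_cv3) ?mul0mx
          ?add_cv3 ?addrr_pchar2 ?(add0r, addr0) ?cv3_000.
Qed.

Lemma V1_cocycleP x0 x1 x2 y0 y1 y2 z0 z1 z2 :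
  is_cocycle (N := V1 K) (M := V0 K)
    (cv3 x0 x1 x2) (cv3 y0 y1 y2) (cv3 z0 z1 z2) <->
  [/\ y0 = x2, z0 = x1, z1 = 0 & z2 = y1].
Proof.
apply: iff_trans (ext_V0_cocycleP _ _ _ V1_umod) _.
rewrite -!mulmxA !(V1_ua_cv3, V1_ub_cv3, V1_uc_cv3, add_cv3) -cv3_000 !(add0r, addr0).
split=> [[/cv3_inj[-> yx ->] _ _ _ /cv3_inj[_ z1_0 _]] | [-> -> -> ->]].
- split=> //; apply/eqP.
  by rewrite -[x2 in _ == x2](oppr_pchar2 char2) -addr_eq0 yx z1_0.
- by rewrite !addrr_pchar2 // !(add0r, addr0).
Qed.

(* e_1 |-> u - t1 v_1 - t2 v_2 and e_(i+1) |-> v_i, in the basis (v_1, v_2, v_3, u). *)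
Definition tlm_to_ext (t1 t2 : K) : 'M[K]_(3 + 1, 4) := col_mx
  (\matrix_(i < 3, j < 4) nth 0 (nth [::] [:: [:: - t1; 1; 0; 0];
                                             [:: - t2; 0; 1; 0];
                                             [:: 0; 0; 0; 1]] i) j)
  (\row_j nth 0 [:: 1; 0; 0; 0] j).

Definition ext_to_tlm (t1 t2 : K) : 'M[K]_(4, 3 + 1) := row_mx
  (\matrix_(i < 4, j < 3) (i == j.+1 :> nat)%:R)
  (\col_i nth 0 [:: 1; t1; t2; 0] i).

Lemma tlm_to_ext_hom x0 x1 x2 y1 y2 :
  is_hom (V := Vtlm x0 y1 y2)
    (W := ext_mod (N := V1 K) (M := V0 K) (cv3 x0 x1 x2) (cv3 x2 y1 y2) (cv3 x1 0 y1))
    (tlm_to_ext x1 x2).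
Proof.
by split; rewrite /= mul_col_mx mul_block_col !mul0mx addr0; congr col_mx; mx_compute.
Qed.

Lemma ext_to_tlmK t1 t2 : ext_to_tlm t1 t2 *m tlm_to_ext t1 t2 = 1%:M.
Proof. by rewrite mul_row_col; mx_compute. Qed.

Lemma tlm_iso_ext x0 x1 x2 y1 y2 :
  isomorphic (Vtlm x0 y1 y2)
    (ext_mod (N := V1 K) (M := V0 K) (cv3 x0 x1 x2) (cv3 x2 y1 y2) (cv3 x1 0 y1)).
Proof.
exact: isomorphic_of_inverse (tlm_to_ext_hom _ _ _ _ _) (ext_to_tlmK _ _)
  (mulmx1C (ext_to_tlmK _ _)).
Qed.

Lemma ext1_dim_V0_V1 : ext1_dim (V0 K) (V1 K) 2.
Proof.
exists (fun i => if val i == 0%N then cv3 1 0 0 else cv3 0 0 0),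
       (fun i => if val i == 0%N then cv3 0 0 0 else cv3 0 0 1),
       (fun _ => cv3 0 0 0); split.
- by case=> [[|[|i]] Hi] //=; apply/V1_cocycleP.
- move=> Xa Xb Xc.
  have [x0 [x1 [x2 ->]]] := cv3_onto Xa.
  have [y0 [y1 [y2 ->]]] := cv3_onto Xb.
  have [z0 [z1 [z2 ->]]] := cv3_onto Xc.
  case/V1_cocycleP => -> -> -> ->.
  exists (fun i => if val i == 0%N then x0 else y2).
  apply/ext_V0_coboundaryP; exists (cv3 x1 x2 y1).
  by rewrite !big_ord_recl !big_ord0 /=; split; mx_compute.
- move=> al; rewrite !big_ord_recl !big_ord0 /=.
  case/ext_V0_coboundaryP => Y; have [a [b [c ->]]] := cv3_onto Y.
  rewrite !(scale_cv3, V1_ua_cv3, V1_ub_cv3, V1_uc_cv3) -cv3_000 !add_cv3.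
  case=> /cv3_inj[al0 _ _] /cv3_inj[_ _ al1] _.
  move: al0 al1; rewrite !(mulr0, mulr1, addr0, add0r) => al0 al1.
  by case=> [[|[|i]] Hi] //; [rewrite -al0 | rewrite -al1]; congr al; apply: val_inj.
Qed.

End ExtensionsOfV0ByV1.

Theorem lemma3p6 (K : closedFieldType) (char2 : (2 \in [pchar K])%N) :
  (forall (U : umod K), is_umod U ->
     forall (f : 'M[K]_(udim U, udim (V1 K))) (g : 'M[K]_(udim (V0 K), udim U)),
       short_exact f g ->
       exists th la mu : K, isomorphic (Vtlm th la mu) U)
  /\ ext1_dim (V0 K) (V1 K) 2.
Proof.
split; last exact: ext1_dim_V0_V1.
move=> U Uumod f g /short_exact_V0_ext[Xa [Xb [Xc isoU]]].
have [phi [homphi injphi _]] := isoU.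
move: (is_umod_inj_hom homphi injphi Uumod) isoU.
have [x0 [x1 [x2 ->]]] := cv3_onto Xa.
have [y0 [y1 [y2 ->]]] := cv3_onto Xb.
have [z0 [z1 [z2 ->]]] := cv3_onto Xc.
case/(V1_cocycleP char2) => -> -> -> -> isoU.
by exists x0, y1, y2; apply: isomorphic_trans (tlm_iso_ext _ _ _ _ _) isoU.
Qed.
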